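(* Let $G=K(n_1,\dots,n_s)$ be a complete $s$-partite graph ($s\ge 2$) with parts $V_1,\dots,V_s$, $|V_j|=n_j$. If $j\in\{1,\dots,s\}$ satisfies $n_j\ge 2$, then $\chi_1(G)=\chi_1(G-V_j)+1$.
   Context: A map $f:V(G)\to\{1,\dots,k\}$ is a $1$-relaxed $k$-coloring if every vertex $u$ has at most one neighbor $v$ with $f(v)=f(u)$; $\chi_1(G)$ is the minimum $k$ for which such a coloring exists. $G-V_j$ is the graph obtained by deleting the vertices of $V_j$. *)

From mathcomp Require Import all_boot all_order.
Set Implicit Arguments. Unset Strict Implicit. Unset Printing Implicit Defensive.

(* A graph is given by a vertex set A : {set T} (T a finType) and an edge
   relation e : rel T; the graph is the one induced on A. *)
Definition relaxed1_colorable (T : finType) (e : rel T) (A : {set T}) (k : nat) : bool :=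
  [exists f : {ffun T -> 'I_k},
     [forall u in A, #|[set v in A | e u v && (f v == f u)]| <= 1]].

Lemma relaxed1_colorable_card (T : finType) (e : rel T) (A : {set T}) :
  relaxed1_colorable e A #|T|.
Proof.
apply/existsP; exists [ffun x => enum_rank x]; apply/forall_inP => u _.
apply: (leq_trans (subset_leq_card (B := [set u]) _)); last by rewrite cards1.
apply/subsetP => v; rewrite !inE !ffunE => /and3P[_ _ /eqP /enum_rank_inj ->].
by rewrite eqxx.
Qed.

Lemma relaxed1_colorable_ex (T : finType) (e : rel T) (A : {set T}) :
  exists k, relaxed1_colorable e A k.
Proof. by exists #|T|; apply: relaxed1_colorable_card. Qed.

Definition chi1 (T : finType) (e : rel T) (A : {set T}) : nat :=
  ex_minn (relaxed1_colorable_ex e A).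

(* The complete s-partite graph K(n_1,...,n_s): vertices are pairs (i, a) with
   i : 'I_s the part and a : 'I_(n i); two vertices are adjacent iff they lie in
   different parts. *)
Definition kpart_vertex (s : nat) (n : 'I_s -> nat) : finType :=
  {i : 'I_s & 'I_(n i)}.

Definition kpart_adj (s : nat) (n : 'I_s -> nat) : rel (kpart_vertex n) :=
  fun x y => tag x != tag y.

Definition kpart_part (s : nat) (n : 'I_s -> nat) (j : 'I_s) : {set kpart_vertex n} :=
  [set x | tag x == j].

From mathcomp Require Import all_boot all_order.
Set Implicit Arguments. Unset Strict Implicit. Unset Printing Implicit Defensive.

(* Adding V_j under a fresh colour gives chi_1(G) <= chi_1(G - V_j) + 1, since
   V_j is independent. Conversely, take a 1-relaxed colouring of G and two
   vertices a != b of V_j. Both are adjacent to all of G - V_j, so each of the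
   colours of a and b is used at most once on G - V_j; merging these two colour
   classes keeps the colouring of G - V_j 1-relaxed and frees a colour. *)

Definition relaxed1_coloring (T : finType) (e : rel T) (A : {set T}) k
    (f : T -> 'I_k) : Prop :=
  {in A, forall u, #|[set v in A | e u v && (f v == f u)]| <= 1}.

Section RelaxedColoring.

Variables (T : finType) (e : rel T).

Lemma relaxed1_colorableP (A : {set T}) k :
  reflect (exists f : T -> 'I_k, relaxed1_coloring e A f)
          (relaxed1_colorable e A k).
Proof.
apply: (iffP existsP) => [[f /forall_inP fA] | [f fA]]; first by exists f.
exists (finfun f); apply/forall_inP => u uA.
have -> : [set v in A | e u v && (finfun f v == finfun f u)]
        = [set v in A | e u v && (f v == f u)].
  by apply/setP => v; rewrite !inE !ffunE.
exact: fA.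
Qed.

Lemma chi1_colorable (A : {set T}) : relaxed1_colorable e A (chi1 e A).
Proof. by rewrite /chi1; case: ex_minnP. Qed.

Lemma chi1_min (A : {set T}) k : relaxed1_colorable e A k -> chi1 e A <= k.
Proof. by rewrite /chi1; case: ex_minnP => m _; apply. Qed.

Lemma relaxed1_colorable_gt0 (x : T) (A : {set T}) k :
  relaxed1_colorable e A k -> 0 < k.
Proof. by case: k => // /existsP[f _]; case: (f x). Qed.

Lemma relaxed1_coloring_sub (A B : {set T}) k (f : T -> 'I_k) :
  B \subset A -> relaxed1_coloring e A f -> relaxed1_coloring e B f.
Proof.
move=> sBA fA u uB; apply: leq_trans (fA u (subsetP sBA u uB)).
apply/subset_leq_card/subsetP => v; rewrite !inE => /andP[vB ->].
by rewrite (subsetP sBA v vB).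
Qed.

Lemma relaxed1_coloring_class_le1 (A B : {set T}) k (f : T -> 'I_k) (w : T) :
  relaxed1_coloring e A f -> B \subset A -> w \in A -> {in B, forall u, e w u} ->
  #|[set v in B | f v == f w]| <= 1.
Proof.
move=> fA sBA wA ewB; apply: leq_trans (fA w wA); apply/subset_leq_card/subsetP.
move=> v; rewrite !inE eq_sym => /andP[vB ->].
by rewrite (subsetP sBA v vB) ewB.
Qed.

Lemma relaxed1_colorable_add_independent (A C : {set T}) k :
  {in C &, forall u v, ~~ e u v} ->
  relaxed1_colorable e (A :\: C) k -> relaxed1_colorable e A k.+1.
Proof.
move=> indC /relaxed1_colorableP[f fAC]; apply/relaxed1_colorableP.
exists (fun v => if v \in C then ord_max else lift ord_max (f v)) => u uA.
have liftN v : lift ord_max (f v) != ord_max by rewrite eq_sym neq_lift.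
case: ifPn => uC.
  rewrite leqW // leqn0 cards_eq0; apply/eqP/setP => v; rewrite !inE.
  case: ifPn => vC; last by rewrite (negbTE (liftN v)) !andbF.
  by rewrite (negbTE (indC u v uC vC)) andbF.
have uAC : u \in A :\: C by rewrite inE uC.
apply: leq_trans (fAC u uAC); apply/subset_leq_card/subsetP => v.
rewrite !inE => /andP[vA /andP[euv]].
case: ifPn => vC; first by rewrite eq_sym (negbTE (liftN u)).
by move=> /eqP /lift_inj ->; rewrite vA euv eqxx.
Qed.

Lemma relaxed1_coloring_drop_color (A : {set T}) (x : T) k
    (f : T -> 'I_k.+1) (c : 'I_k.+1) :
  x \in A -> relaxed1_coloring e A f -> {in A, forall u, f u != c} ->
  relaxed1_colorable e A k.
Proof.
move=> xA fA fNc; apply/relaxed1_colorableP.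
have [d _] : exists d : 'I_k, true.
  case: (unliftP c (f x)) => [d _ | fxc]; first by exists d.
  by move: (fNc x xA); rewrite fxc eqxx.
exists (fun v => odflt d (unlift c (f v))) => u uA.
apply: leq_trans (fA u uA); apply/subset_leq_card/subsetP => v; rewrite !inE.
case/andP=> vA /andP[euv]; rewrite vA euv /=.
case: (unliftP c (f v)) => [dv -> | fvc]; last by move: (fNc v vA); rewrite fvc eqxx.
case: (unliftP c (f u)) => [du -> | fuc]; last by move: (fNc u uA); rewrite fuc eqxx.
by move=> /= /eqP ->.
Qed.

Hypothesis e_irr : irreflexive e.

(* Irreflexivity matters: a loop at u would let u count itself. *)
Lemma relaxed1_coloring_merge (A : {set T}) k (f : T -> 'I_k) (c d : 'I_k) :
  relaxed1_coloring e A f ->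
  #|[set v in A | f v == c]| <= 1 -> #|[set v in A | f v == d]| <= 1 ->
  relaxed1_coloring e A (fun v => if f v == c then d else f v).
Proof.
move=> fA classc classd; set g := fun v => _; move=> u uA.
have gd v : (g v == d) = (f v == c) || (f v == d).
  by rewrite /g; case: (f v =P c); rewrite ?eqxx.
case: (boolP (g u == d)) => gud.
  set U := [set v in A | f v == c] :|: [set v in A | f v == d].
  have uU : u \in U by rewrite !inE uA -gd.
  have cardU : #|U :\ u| <= 1.
    have := leq_trans (leq_card_setU _ _) (leq_add classc classd).
    by rewrite (cardsD1 u) uU.
  apply: leq_trans cardU; apply/subset_leq_card/subsetP => v.
  rewrite !inE (eqP gud) gd => /and3P[vA euv vcd]; rewrite vA /= vcd andbT.
  by apply: contraTneq euv => ->; rewrite e_irr.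
apply: leq_trans (fA u uA); apply/subset_leq_card/subsetP => v.
rewrite !inE => /and3P[vA euv]; rewrite vA euv /=.
move: gud; rewrite gd => /norP[fuc fud]; rewrite /g /= (negbTE fuc).
by case: ifP => // _ /eqP dfu; rewrite dfu eqxx in fud.
Qed.

Hypothesis e_sym : symmetric e.

Lemma relaxed1_coloring_two_neighbours (A : {set T}) k (f : T -> 'I_k) (a b u : T) :
  relaxed1_coloring e A f -> a \in A -> b \in A -> u \in A -> a != b ->
  e a u -> e b u -> f a = f b -> f u != f a.
Proof.
move=> fA aA bA uA ab eau ebu fab; apply/eqP => fua.
have : [set a; b] \subset [set v in A | e u v && (f v == f u)].
  by apply/subsetP => v; rewrite !inE => /orP[] /eqP ->;
     rewrite ?aA ?bA e_sym ?eau ?ebu fua ?fab eqxx.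
by move/subset_leq_card; rewrite cards2 ab => /leq_trans/(_ (fA u uA)).
Qed.

Lemma relaxed1_colorable_two_dominators (A B : {set T}) (a b x : T) k :
  B \subset A -> a \in A -> b \in A -> a != b ->
  {in B, forall u, e a u && e b u} -> x \in B ->
  relaxed1_colorable e A k.+1 -> relaxed1_colorable e B k.
Proof.
move=> sBA aA bA ab domB xB /relaxed1_colorableP[f fA].
have eaB : {in B, forall u, e a u} by move=> u /domB /andP[].
have ebB : {in B, forall u, e b u} by move=> u /domB /andP[].
have fB := relaxed1_coloring_sub sBA fA.
have gB := relaxed1_coloring_merge fB
  (relaxed1_coloring_class_le1 fA sBA bA ebB)
  (relaxed1_coloring_class_le1 fA sBA aA eaB).
apply: (relaxed1_coloring_drop_color (c := f b) xB gB) => u uB /=.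
have uA := subsetP sBA u uB.
case: (f u =P f b) => [fub | /eqP //]; apply/eqP => fab.
have := relaxed1_coloring_two_neighbours fA aA bA uA ab (eaB u uB) (ebB u uB) fab.
by rewrite fub fab eqxx.
Qed.

End RelaxedColoring.

Section CompleteMultipartite.

Variables (s : nat) (n : 'I_s -> nat).

Lemma kpart_adj_sym : symmetric (@kpart_adj s n).
Proof. by move=> x y; rewrite /kpart_adj eq_sym. Qed.

Lemma kpart_adj_irr : irreflexive (@kpart_adj s n).
Proof. by move=> x; rewrite /kpart_adj eqxx. Qed.

Lemma kpart_part_independent (j : 'I_s) :
  {in kpart_part n j &, forall u v, ~~ kpart_adj u v}.
Proof. by move=> u v; rewrite !inE /kpart_adj => /eqP -> /eqP ->; rewrite eqxx. Qed.

Lemma kpart_adj_partC (j : 'I_s) (u v : kpart_vertex n) :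
  u \in kpart_part n j -> v \in ~: kpart_part n j -> kpart_adj u v.
Proof. by rewrite !inE /kpart_adj => /eqP ->; rewrite eq_sym. Qed.

Lemma kpart_partC_nonempty (j : 'I_s) :
  1 < s -> (forall i, 0 < n i) -> exists x, x \in ~: kpart_part n j.
Proof.
move=> s_gt1 n_gt0.
have [i ij] : exists i : 'I_s, i != j.
  case: (eqVneq (Ordinal s_gt1) j) => [<- | ]; last by exists (Ordinal s_gt1).
  by exists (Ordinal (ltnW s_gt1)); apply/eqP => /(congr1 val).
by exists (Tagged (fun i => 'I_(n i)) (Ordinal (n_gt0 i))); rewrite !inE.
Qed.

Lemma kpart_part_two_vertices (j : 'I_s) :
  1 < n j -> exists a b,
    [/\ a \in kpart_part n j, b \in kpart_part n j & a != b].
Proof.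
move=> nj_gt1.
exists (Tagged (fun i => 'I_(n i)) (Ordinal (ltnW nj_gt1))).
exists (Tagged (fun i => 'I_(n i)) (Ordinal nj_gt1)).
rewrite !inE !eqxx; split=> //.
by apply/eqP => /(congr1 (fun x : kpart_vertex n => val (tagged x))).
Qed.

End CompleteMultipartite.

Theorem corollary4p2 (s : nat) (n : 'I_s -> nat) (j : 'I_s) :
  2 <= s ->
  (forall i, 0 < n i) ->
  2 <= n j ->
  chi1 (@kpart_adj s n) [set: kpart_vertex n]
  = (chi1 (@kpart_adj s n) (~: kpart_part n j)).+1.
Proof.
move=> s_gt1 n_gt0 nj_gt1.
have [x xB] := kpart_partC_nonempty j s_gt1 n_gt0.
have [a [b [aj bj ab]]] := kpart_part_two_vertices nj_gt1.
have colG := chi1_colorable (@kpart_adj s n) [set: kpart_vertex n].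
have chiG_gt0 := relaxed1_colorable_gt0 x colG.
apply/eqP; rewrite eqn_leq; apply/andP; split.
- apply: chi1_min; apply: (relaxed1_colorable_add_independent (C := kpart_part n j)).
    exact: kpart_part_independent.
  by rewrite setTD; apply: chi1_colorable.
- rewrite -(prednK chiG_gt0) ltnS; apply: chi1_min.
  apply: (relaxed1_colorable_two_dominators (@kpart_adj_irr s n) (@kpart_adj_sym s n)
            (subsetT _) (in_setT a) (in_setT b) ab _ xB).
  + by move=> u uB; rewrite !(kpart_adj_partC _ uB).
  + by rewrite prednK.
Qed.
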